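(* Let $x,y\in\mathbb{R}$ with $x^2+y^2=1$, let $0<\alpha\le1/2$, and let $x_0,y_0\in\mathbb{R}$ satisfy $|x-x_0|\le\alpha$ and $|y-y_0|\le\alpha$. Then $$|\phi(x,y)-\phi(x_0,y_0)|_{2\pi}\le\arcsin(\alpha)+\arcsin\Bigl(\frac{\alpha}{1-\alpha}\Bigr).$$
   Context: For $(u,v)\neq(0,0)$, $\phi(u,v)$ denotes the polar angle of the point $(u,v)$ (i.e. $u=r\cos\phi$, $v=r\sin\phi$ with $r>0$), defined modulo $2\pi$. For angles $a,b$, $|a-b|_{2\pi}=\min\bigl((a-b)\bmod 2\pi,\,(b-a)\bmod 2\pi\bigr)$. *)

From Stdlib Require Import Reals Lra.
Open Scope R_scope.

(* t is a polar angle of (u,v): u = r cos t, v = r sin t for some r > 0.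
   (Polar angles are defined modulo 2*PI; we work with all representatives.) *)
Definition is_polar_angle (u v t : R) : Prop :=
  exists r : R, 0 < r /\ u = r * cos t /\ v = r * sin t.

(* a mod 2*PI, taking values in [0, 2*PI); Int_part is the floor function. *)
Definition mod2pi (a : R) : R :=
  a - 2 * PI * IZR (Int_part (a / (2 * PI))).

Definition dist2pi (a b : R) : R :=
  Rmin (mod2pi (a - b)) (mod2pi (b - a)).

(* The point (x0, y0) lies within Euclidean distance sqrt 2 * alpha of the unit
   vector (x, y).  Comparing the projection of (x0, y0) onto (x, y) with its
   length shows that the cosine of the angle between them is at least
   1 - |(x, y) - (x0, y0)|^2 >= 1 - 2 alpha^2 = cos (2 asin alpha).  Hence the
   angular distance is at most 2 asin alpha, which is below the stated bound
   because asin is increasing and alpha <= alpha / (1 - alpha). *)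

From Stdlib Require Import Reals Lra Lia Psatz ZArith.
Open Scope R_scope.

Lemma cos_sub_2PI_IZR (a : R) (k : Z) : cos (a - 2 * PI * IZR k) = cos a.
Proof.
  destruct (Z_le_gt_dec 0 k) as [Hk | Hk].
  - rewrite <- (Z2Nat.id k Hk), <- INR_IZR_INZ.
    rewrite <- (cos_period (a - 2 * PI * INR (Z.to_nat k)) (Z.to_nat k)).
    f_equal; ring.
  - replace k with (- Z.of_nat (Z.to_nat (- k)))%Z by lia.
    rewrite opp_IZR, <- INR_IZR_INZ, <- (cos_period a (Z.to_nat (- k))).
    f_equal; ring.
Qed.

Lemma mod2pi_range (a : R) : 0 <= mod2pi a < 2 * PI.
Proof.
  unfold mod2pi.
  pose proof PI_RGT_0.
  destruct (base_Int_part (a / (2 * PI))) as [Hlo Hhi].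
  assert (Ha : a = 2 * PI * (a / (2 * PI))) by (field; lra).
  split; nra.
Qed.

Lemma cos_mod2pi (a : R) : cos (mod2pi a) = cos a.
Proof. apply cos_sub_2PI_IZR. Qed.

(* The two terms differ from [a] and [-a] by multiples of [2 PI], so their sum
   is a multiple of [2 PI] lying in [[0, 4 PI)]. *)
Lemma mod2pi_add_opp_le (a : R) : mod2pi a + mod2pi (- a) <= 2 * PI.
Proof.
  pose proof PI_RGT_0.
  pose proof (mod2pi_range a). pose proof (mod2pi_range (- a)).
  set (n := (- (Int_part (a / (2 * PI)) + Int_part (- a / (2 * PI))))%Z).
  assert (Hsum : mod2pi a + mod2pi (- a) = 2 * PI * IZR n).
  { unfold mod2pi, n. rewrite opp_IZR, plus_IZR. ring. }
  assert (Hn : (n <= 1)%Z).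
  { assert (Hlt : IZR n < 2) by nra. apply lt_IZR in Hlt. lia. }
  apply IZR_le in Hn. rewrite Hsum. nra.
Qed.

Lemma dist2pi_le_of_cos_le (a b B : R) :
  0 <= B <= PI -> cos B <= cos (a - b) -> dist2pi a b <= B.
Proof.
  intros HB Hcos.
  assert (Hopp : b - a = - (a - b)) by ring.
  pose proof (mod2pi_range (a - b)). pose proof (mod2pi_range (b - a)).
  assert (Hsum := mod2pi_add_opp_le (a - b)). rewrite <- Hopp in Hsum.
  assert (Hd : 0 <= dist2pi a b <= PI).
  { unfold dist2pi. split; [apply Rmin_glb; lra|].
    pose proof (Rmin_l (mod2pi (a - b)) (mod2pi (b - a))).
    pose proof (Rmin_r (mod2pi (a - b)) (mod2pi (b - a))). lra. }
  assert (Hcd : cos (dist2pi a b) = cos (a - b)).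
  { unfold dist2pi. apply (Rmin_case _ _ (fun d => cos d = cos (a - b))).
    - apply cos_mod2pi.
    - rewrite cos_mod2pi, Hopp. apply cos_neg. }
  apply cos_decr_0; lra.
Qed.

Lemma polar_angle_unit (u v t : R) :
  u ^ 2 + v ^ 2 = 1 -> is_polar_angle u v t -> u = cos t /\ v = sin t.
Proof.
  intros Huv [r [Hr [Hu Hv]]].
  pose proof (sin2_cos2 t) as Hsc. unfold Rsqr in Hsc.
  assert (Hr1 : r = 1).
  { assert (r ^ 2 = 1) by (rewrite <- Huv, Hu, Hv; nra). nra. }
  subst r. lra.
Qed.

(* With [E] the squared distance from the unit vector [u = (c, s)] to
   [w = r0 (c0, s0)] and [C] the cosine of the angle between them:
   [r0 C = 1 + u.(w - u)], [r0^2 = 1 + 2 u.(w - u) + E], and the identity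
   [(r0 C)^2 - (1 - E) r0^2 = (u.(w - u) + E)^2] gives [C^2 >= 1 - E],
   hence [C >= 1 - E] since [C >= 0] and [1 - E <= 1]. *)
Lemma unit_dot_ge (c s c0 s0 r0 : R) :
  c ^ 2 + s ^ 2 = 1 -> c0 ^ 2 + s0 ^ 2 = 1 -> 0 < r0 ->
  (c - r0 * c0) ^ 2 + (s - r0 * s0) ^ 2 <= 1 ->
  1 - ((c - r0 * c0) ^ 2 + (s - r0 * s0) ^ 2) <= c * c0 + s * s0.
Proof.
  intros Hu Hu0 Hr0 HE.
  set (E := (c - r0 * c0) ^ 2 + (s - r0 * s0) ^ 2) in *.
  set (sg := c * (r0 * c0 - c) + s * (r0 * s0 - s)).
  set (C := c * c0 + s * s0).
  assert (Hsg : sg ^ 2 <= E).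
  { assert (E * (c ^ 2 + s ^ 2) - sg ^ 2
            = (c * (r0 * s0 - s) - s * (r0 * c0 - c)) ^ 2)
      by (unfold E, sg; ring).
    pose proof (pow2_ge_0 (c * (r0 * s0 - s) - s * (r0 * c0 - c))). nra. }
  assert (HrC : r0 * C = 1 + sg) by (unfold C, sg; nra).
  assert (Hr2 : r0 ^ 2 = 1 + 2 * sg + E) by (unfold E, sg; nra).
  assert (HC0 : 0 <= C) by nra.
  assert (HC2 : 1 - E <= C ^ 2).
  { assert (Hid : (r0 * C) ^ 2 - (1 - E) * r0 ^ 2 = (sg + E) ^ 2)
      by (rewrite HrC, Hr2; ring).
    apply Rmult_le_reg_l with (r0 ^ 2); [nra|].
    pose proof (pow2_ge_0 (sg + E)). nra. }
  assert (HE0 : 0 <= E)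
    by (unfold E; pose proof (pow2_ge_0 (c - r0 * c0));
        pose proof (pow2_ge_0 (s - r0 * s0)); lra).
  destruct (Rle_lt_dec (1 - E) C) as [Hle | Hlt]; [exact Hle|].
  nra.
Qed.

Lemma cos_sub_ge_one_sub_dist (t t0 r0 : R) : 0 < r0 ->
  (cos t - r0 * cos t0) ^ 2 + (sin t - r0 * sin t0) ^ 2 <= 1 ->
  1 - ((cos t - r0 * cos t0) ^ 2 + (sin t - r0 * sin t0) ^ 2) <= cos (t - t0).
Proof.
  intros Hr0 HE. rewrite cos_minus.
  pose proof (sin2_cos2 t). pose proof (sin2_cos2 t0). unfold Rsqr in *.
  apply unit_dot_ge; auto; nra.
Qed.

Lemma pow2_le_of_Rabs_le (d a : R) : Rabs d <= a -> d ^ 2 <= a ^ 2.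
Proof.
  intros Hd. rewrite <- (pow2_abs d).
  pose proof (Rabs_pos d). nra.
Qed.

Lemma cos_two_asin (a : R) : -1 <= a <= 1 -> cos (2 * asin a) = 1 - 2 * a ^ 2.
Proof. intros Ha. rewrite cos_2a_sin, sin_asin by exact Ha. ring. Qed.

Lemma asin_le (a b : R) : -1 <= a -> a <= b -> b <= 1 -> asin a <= asin b.
Proof.
  intros Ha Hab Hb.
  pose proof (asin_bound a). pose proof (asin_bound b).
  apply sin_incr_0; try lra.
  rewrite !sin_asin; lra.
Qed.

Lemma two_asin_le (alpha : R) : 0 < alpha <= 1 / 2 ->
  2 * asin alpha <= asin alpha + asin (alpha / (1 - alpha)).
Proof.
  intros Ha.
  assert (Hbeta : alpha <= alpha / (1 - alpha) <= 1).
  { split; apply Rmult_le_reg_r with (1 - alpha); try lra;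
      field_simplify; nra. }
  pose proof (asin_le alpha (alpha / (1 - alpha))). lra.
Qed.

Theorem theorem5p1 (x y x0 y0 alpha : R)
  (hxy : x ^ 2 + y ^ 2 = 1)
  (ha0 : 0 < alpha) (ha1 : alpha <= 1 / 2)
  (hx : Rabs (x - x0) <= alpha) (hy : Rabs (y - y0) <= alpha) :
  forall t t0 : R, is_polar_angle x y t -> is_polar_angle x0 y0 t0 ->
    dist2pi t t0 <= asin alpha + asin (alpha / (1 - alpha)).
Proof.
  intros t t0 Ht [r0 [Hr0 [Hx0 Hy0]]].
  destruct (polar_angle_unit x y t hxy Ht) as [Hx Hy].
  subst x y x0 y0.
  apply pow2_le_of_Rabs_le in hx. apply pow2_le_of_Rabs_le in hy.
  assert (Hcos : 1 - 2 * alpha ^ 2 <= cos (t - t0)).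
  { apply Rle_trans
      with (1 - ((cos t - r0 * cos t0) ^ 2 + (sin t - r0 * sin t0) ^ 2)).
    - lra.
    - apply cos_sub_ge_one_sub_dist; nra. }
  assert (Hasin0 : 0 <= asin alpha)
    by (rewrite <- asin_0; apply asin_le; lra).
  pose proof (asin_bound alpha).
  apply Rle_trans with (2 * asin alpha); [|apply two_asin_le; lra].
  apply dist2pi_le_of_cos_le.
  - lra.
  - rewrite cos_two_asin; lra.
Qed.
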